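(* Let $N\ge2$ and let $C\subset\mathbb{P}^N$ be an irreducible curve with $C\cap\Delta_{N-2}=\emptyset$. Then every coordinate point $p$ of $\mathbb{P}^N$ (e.g. $p=(1:0:\cdots:0)$) satisfies $\operatorname{Hrk}_C(p)=N$.
   Context: Hadamard product: $(p_0:\cdots:p_N)\star(q_0:\cdots:q_N)=(p_0q_0:\cdots:p_Nq_N)$, defined when not all $p_iq_i$ vanish. $\operatorname{Hrk}_C(q)=\min\{m\mid q=p_1\star\cdots\star p_m,\ p_i\in C\}$ ($\infty$ if none). $\Delta_{N-2}\subset\mathbb{P}^N$ is the set of points with at least two coordinates equal to zero. *)

From HB Require Import structures.
From mathcomp Require Import all_boot all_order all_algebra.
From mathcomp Require Import mpoly.
Set Implicit Arguments. Unset Strict Implicit. Unset Printing Implicit Defensive.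
Import Order.TTheory GRing.Theory.
Local Open Scope ring_scope.

Section Proj.
Variables (K : closedFieldType) (N : nat).

(* Homogeneous coordinates: a point of P^N is represented by a nonzero
   vector x : 'I_(N+1) -> K, up to nonzero scaling. Subsets of P^N are
   represented by scaling-invariant predicates on nonzero vectors. *)
Definition vec := 'I_N.+1 -> K.

Definition nonzero (x : vec) : Prop := exists i, x i != 0.

Definition proj_eq (x y : vec) : Prop :=
  nonzero x /\ exists c : K, c != 0 /\ forall i, y i = c * x i.

Definition homogeneous (d : nat) (p : {mpoly K[N.+1]}) : Prop :=
  {in msupp p, forall m, mdeg m = d}.

Definition Vzero (S : {mpoly K[N.+1]} -> Prop) (x : vec) : Prop :=
  nonzero x /\ forall p, S p -> p.@[x] = 0.

Definition zclosed (A : vec -> Prop) : Prop :=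
  exists S : {mpoly K[N.+1]} -> Prop,
    (forall p, S p -> exists d, homogeneous d p) /\ forall x, A x <-> Vzero S x.

Definition subsetP (A B : vec -> Prop) : Prop := forall x, A x -> B x.
Definition psubsetP (A B : vec -> Prop) : Prop :=
  subsetP A B /\ exists x, B x /\ ~ A x.

Definition irreducible (A : vec -> Prop) : Prop :=
  zclosed A /\ (exists x, A x) /\
  forall B1 B2, zclosed B1 -> zclosed B2 -> subsetP A (fun x => B1 x \/ B2 x) ->
    subsetP A B1 \/ subsetP A B2.

(* irreducible curve: irreducible closed subset of (Krull) dimension 1:
   the longest chain of irreducible closed subsets Z0 < Z1 < ... inside C
   has length exactly 1. *)
Definition irreducible_curve (C : vec -> Prop) : Prop :=
  irreducible C /\
  (exists Z, irreducible Z /\ psubsetP Z C) /\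
  ~ (exists Z0 Z1, irreducible Z0 /\ irreducible Z1 /\
        psubsetP Z0 Z1 /\ psubsetP Z1 C).

Definition Delta (x : vec) : Prop :=
  exists i j : 'I_N.+1, i != j /\ x i = 0 /\ x j = 0.

Definition hadamard_prod (m : nat) (ps : 'I_m -> vec) : vec :=
  fun i => \prod_(j < m) ps j i.

(* q = p_1 * ... * p_m with p_j in C (the product being defined, i.e.
   nonzero, which is forced by proj_eq) *)
Definition hdecomp (C : vec -> Prop) (q : vec) (m : nat) : Prop :=
  exists ps : 'I_m -> vec, (forall j, C (ps j)) /\ proj_eq (hadamard_prod ps) q.

Definition Hrk_is (C : vec -> Prop) (q : vec) (n : nat) : Prop :=
  (0 < n)%N /\ hdecomp C q n /\ forall m, (0 < m)%N -> hdecomp C q m -> (n <= m)%N.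

Definition coord_point (k : 'I_N.+1) : vec := fun i => (i == k)%:R.

End Proj.

(* For every i <> k pick a point of C on the hyperplane x_i = 0; having no
   other zero coordinate, the Hadamard product of these N points is the
   coordinate point e_k.  Conversely, each factor of a decomposition of e_k
   vanishes at no more than one of the N coordinates other than k, so at
   least N factors are needed.
   The geometric input is that a curve meets every coordinate hyperplane.  A
   closed set avoiding x_i = 0 is finite: project it from a coordinate point
   of that hyperplane; the image is closed (elimination by resultants) and
   avoids a hyperplane, and the fibres are finite, so induction on N applies.
   An irreducible finite set is a single point, and a curve is not a point. *)

From mathcomp Require Import all_boot all_order all_algebra.
From mathcomp Require Import mpoly.
From Stdlib Require Import Classical FunctionalExtensionality.
From Stdlib Require List.
From mathcomp Require Import ring.
Set Implicit Arguments. Unset Strict Implicit. Unset Printing Implicit Defensive.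
Import Order.TTheory GRing.Theory.
Local Open Scope ring_scope.

Section ClosedField.
Variable K : closedFieldType.

Lemma exists_notin_seq (s : seq K) : exists x, x \notin s.
Proof.
have /closed_nonrootP [x] : \prod_(a <- s) ('X - a%:P) != 0 :> {poly K}.
  by rewrite monic_neq0 // monic_prod_XsubC.
by rewrite root_prod_XsubC; exists x.
Qed.

Lemma poly_roots_finite (q : {poly K}) : q != 0 ->
  exists rs : seq K, forall x, root q x -> x \in rs.
Proof.
move=> q0; have [rs qE] := closed_field_poly_normal q; exists rs => x.
by rewrite qE rootZ ?lead_coef_eq0 // root_prod_XsubC.
Qed.

(* The library's [map_resultant] only covers morphisms out of a polynomial ring. *)
Lemma rmorph_resultant (aR rR : nzRingType) (f : {rmorphism aR -> rR})
    (q r : {poly aR}) :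
    f (lead_coef q) != 0 -> f (lead_coef r) != 0 ->
  f (resultant q r) = resultant (map_poly f q) (map_poly f r).
Proof.
move=> fq_neq0 fr_neq0; rewrite /resultant /Sylvester_mx !size_map_poly_id0 //.
rewrite -det_map_mx /= map_col_mx; congr (\det (col_mx _ _));
  by apply: map_lin1_mx => v; rewrite map_poly_rV rmorphM /= map_rVpoly.
Qed.

Lemma resultant_eq0_common_root (q r : {poly K}) : q != 0 ->
  (resultant q r == 0) <-> exists x, root q x /\ root r x.
Proof.
move=> q0; rewrite resultant_eq0; split.
  move=> gcd_gt1; have : size (gcdp q r) != 1%N by rewrite neq_ltn gcd_gt1 orbT.
  by case/closed_rootP => x; rewrite root_gcd => /andP[? ?]; exists x.
case=> x [qx rx]; apply: (@root_size_gt1 _ x); first by rewrite gcdp_eq0 negb_and q0.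
by rewrite root_gcd qx rx.
Qed.

End ClosedField.

Lemma meval_homog_scale (R : comNzRingType) m d (f : {mpoly R[m]}) c (x : 'I_m -> R) :
  f \is d.-homog -> f.@[fun i => c * x i] = c ^+ d * f.@[x].
Proof.
move=> /dhomogP f_homog; rewrite !mevalE mulr_sumr; apply: eq_big_seq => u fu.
rewrite mulrCA; congr (_ * _).
under eq_bigr do rewrite exprMn.
by rewrite big_split /= prodrXr -mdegE f_homog.
Qed.

Section ZariskiClosed.
Variable K : closedFieldType.

(* [t |-> h.@[t x]] is the polynomial with coefficients the values at [x] of the
   homogeneous components of [h]; it vanishes on the infinite set [t != 0]. *)
Lemma pihomog_eval_eq0 m (h : {mpoly K[m]}) (x : 'I_m -> K) :
  (forall t, t != 0 -> h.@[fun i => t * x i] = 0) ->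
  forall d, (pihomog mdeg d h).@[x] = 0.
Proof.
move=> h_cone d; pose k := maxn (msize h) d.+1.
pose Q : {poly K} := \poly_(i < k) (pihomog mdeg i h).@[x].
have QE t : Q.[t] = h.@[fun i => t * x i].
  rewrite horner_poly {2}(pihomog_partitionE (mf := mdeg) (leq_maxl (msize h) d.+1)).
  rewrite raddf_sum; apply: eq_bigr => i _.
  by rewrite mulrC; symmetry; apply/meval_homog_scale/pihomogP.
have -> : (pihomog mdeg d h).@[x] = Q`_d by rewrite coef_poly leq_maxr.
suff -> : Q = 0 by rewrite coef0.
apply/eqP/negPn/negP => Q0; have [rs Qrs] := poly_roots_finite Q0.
have [t] := exists_notin_seq (0 :: rs); rewrite inE negb_or => /andP[t0 /negP]; apply.
by apply: Qrs; rewrite /root QE h_cone.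
Qed.

Variable n : nat.
Implicit Types (A B C X : vec K n -> Prop) (x v z : vec K n).

Lemma coord_point_nonzero (k : 'I_n.+1) : nonzero (coord_point K k).
Proof. by exists k; rewrite /coord_point eqxx oner_eq0. Qed.

Lemma nonzero_scale x c : nonzero x -> c != 0 -> nonzero (fun i => c * x i).
Proof. by case=> i xi c0; exists i; rewrite mulf_neq0. Qed.

Lemma zclosed_scale X x c : zclosed X -> X x -> c != 0 -> X (fun i => c * x i).
Proof.
case=> S [S_homog XE] Xx c0; apply/XE; have [x_nz Sx] := (XE x).1 Xx.
split; first exact: nonzero_scale.
move=> f Sf; have [d /dhomogP f_homog] := S_homog f Sf.
by rewrite (meval_homog_scale _ _ f_homog) Sx // mulr0.
Qed.

Lemma zclosed_cone X (T : {mpoly K[n.+1]} -> Prop) :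
  (forall x, X x <-> nonzero x /\ forall h, T h -> h.@[x] = 0) ->
  (forall x c, X x -> c != 0 -> X (fun i => c * x i)) -> zclosed X.
Proof.
move=> XE X_scale; exists (fun f => exists h d, T h /\ f = pihomog mdeg d h); split.
  by move=> _ [h [d [_ ->]]]; exists d; apply/dhomogP/pihomogP.
move=> x; split.
- move=> Xx; have [x_nz _] := (XE x).1 Xx; split => // _ [h [d [Th ->]]].
  by apply: pihomog_eval_eq0 => t t0; apply: ((XE _).1 (X_scale _ _ Xx t0)).2.
- case=> x_nz hS; apply/XE; split => // h Th.
  rewrite (pihomog_partitionE (mf := mdeg) (leqnn (msize h))) raddf_sum big1 // => d _.
  by apply: hS; exists h, d.
Qed.

Lemma zclosed_ext A B : (forall x, A x <-> B x) -> zclosed A -> zclosed B.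
Proof. by move=> AB [S [S_homog AE]]; exists S; split => // x; rewrite -AE AB. Qed.

Lemma zclosed0 : zclosed (fun _ : vec K n => False).
Proof.
apply: (@zclosed_cone _ (fun h => h = 1)) => // x; split => // [[_ /(_ 1 erefl)]].
by rewrite meval1 => /eqP; rewrite oner_eq0.
Qed.

Lemma not_Vzero_exists (S : {mpoly K[n.+1]} -> Prop) x :
  nonzero x -> ~ Vzero S x -> exists f, S f /\ f.@[x] != 0.
Proof.
move=> x_nz xS; apply: NNPP => noS; apply: xS; split => // f Sf.
by have [//|fx] := eqVneq f.@[x] 0; case: noS; exists f.
Qed.

Lemma zclosed_separating X z : zclosed X -> nonzero z -> ~ X z ->
  exists f d, homogeneous d f /\ f.@[z] != 0 /\ forall x, X x -> f.@[x] = 0.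
Proof.
case=> S [S_homog XE] z_nz Xz.
have [f [Sf fz]] : exists f, S f /\ f.@[z] != 0.
  by apply: not_Vzero_exists => // zS; apply/Xz/XE.
have [d f_homog] := S_homog f Sf.
by exists f, d; split => //; split => // x /XE [_]; apply.
Qed.

Lemma zclosedU A B : zclosed A -> zclosed B -> zclosed (fun x => A x \/ B x).
Proof.
move=> zA zB; have [SA [_ AE]] := zA; have [SB [_ BE]] := zB.
apply: (@zclosed_cone _ (fun h => exists f g, SA f /\ SB g /\ h = f * g)); last first.
  by move=> x c [Ax|Bx] c0; [left|right]; apply: zclosed_scale.
move=> x; split.
  case=> [/AE [x_nz Ax] | /BE [x_nz Bx]]; split => // _ [f [g [SAf [SBg ->]]]].
    by rewrite mevalM (Ax f) // mul0r.
  by rewrite mevalM (Bx g) // mulr0.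
case=> x_nz ABx; case: (classic (A x)) => Ax; [by left | right].
have [f [SAf fx]] : exists f, SA f /\ f.@[x] != 0.
  by apply: not_Vzero_exists => // xA; apply/Ax/AE.
apply/BE; split => // g SBg; apply/eqP.
have /eqP := ABx _ (ex_intro _ f (ex_intro _ g (conj SAf (conj SBg erefl)))).
by rewrite mevalM mulf_eq0 (negbTE fx).
Qed.

Lemma zclosed_point v : zclosed (proj_eq v).
Proof.
have [v_nz|v0] := classic (nonzero v); last first.
  by apply: (zclosed_ext _ zclosed0) => x; split => // [[/v0]].
apply: (@zclosed_cone _ (fun h => exists i j, h = v j *: 'X_i - v i *: 'X_j)); last first.
  move=> x c [_ [c' [c'0 xE]]] c0; split => //.
  by exists (c * c'); split; [rewrite mulf_neq0 | move=> i; rewrite xE mulrA].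
move=> x; split.
  case=> _ [c [c0 xE]]; split.
    by case: v_nz => i vi; exists i; rewrite xE mulf_neq0.
  move=> _ [i [j ->]]; rewrite mevalB !mevalZ !mevalXU !xE.
  by rewrite mulrCA [v i * _]mulrCA [v j * v i]mulrC subrr.
case=> x_nz x_eqs; split => //; case: v_nz => i0 vi0.
have xE j : x j = v j * (x i0 / v i0).
  have := x_eqs _ (ex_intro _ j (ex_intro _ i0 erefl)).
  rewrite mevalB !mevalZ !mevalXU => /eqP; rewrite subr_eq0 => /eqP e.
  by apply: (mulfI vi0); rewrite e; field.
exists (x i0 / v i0); split; last by move=> j; rewrite xE mulrC.
by apply/eqP => c0; case: x_nz => j; rewrite xE c0 mulr0 eqxx.
Qed.

Definition points (L : seq (vec K n)) x := exists v, List.In v L /\ proj_eq v x.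

Lemma zclosed_points L : zclosed (points L).
Proof.
elim: L => [|v L IH].
  by apply: (zclosed_ext _ zclosed0) => x; split => // [[v []]].
apply: (zclosed_ext _ (zclosedU (zclosed_point v) IH)) => x; split.
  by case=> [vx|[w [wL wx]]]; [exists v; split; [left|] | exists w; split; [right|]].
by case=> w [[<-|wL] wx]; [left | right; exists w].
Qed.

Lemma irreducible_points C L : irreducible C ->
  (forall x, C x -> points L x) -> exists v, forall x, C x -> proj_eq v x.
Proof.
move=> irrC; elim: L => [|v L IH] CL.
  by case: irrC => _ [[x Cx] _]; case: (CL x Cx) => w [[]].
have CvL x : C x -> proj_eq v x \/ points L x.
  by move=> /CL [w [[<-|wL] wx]]; [left | right; exists w].
have [Cv|CL'] := irrC.2.2 _ _ (zclosed_point v) (zclosed_points L) CvL; last exact: IH.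
by exists v.
Qed.

Lemma curve_not_point C : irreducible_curve C -> ~ exists v, forall x, C x -> proj_eq v x.
Proof.
case=> _ [[Z [[zZ [[z Zz] _]] [ZC [x [Cx Zx]]]]] _] [v Cv]; apply: Zx.
have [_ [c [c0 zE]]] := Cv z (ZC z Zz); have [_ [c' [c'0 xE]]] := Cv x Cx.
have -> : x = (fun i => (c' / c) * z i).
  by apply: functional_extensionality => i; rewrite xE zE; field.
by apply: zclosed_scale => //; rewrite mulf_neq0 ?invr_eq0.
Qed.

End ZariskiClosed.

Section Pivot.
Variables (K : closedFieldType) (n : nat) (p : 'I_n.+2).
Implicit Types (y : vec K n) (f : {mpoly K[n.+2]}) (m : 'X_{1..n.+2}).

Definition vinsert y (s : K) : vec K n.+1 :=
  fun i => if unlift p i is Some j then y j else s.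

Lemma vinsert_lift y s j : vinsert y s (lift p j) = y j.
Proof. by rewrite /vinsert liftK. Qed.

Lemma vinsert_pivot y s : vinsert y s p = s.
Proof. by rewrite /vinsert unlift_none. Qed.

Lemma vinsert_scale y s c :
  (fun i => c * vinsert y s i) = vinsert (fun j => c * y j) (c * s).
Proof. by apply: functional_extensionality => i; rewrite /vinsert; case: unliftP. Qed.

Lemma vinsert_nonzero y s : nonzero y -> nonzero (vinsert y s).
Proof. by case=> j yj; exists (lift p j); rewrite vinsert_lift. Qed.

Lemma vinsert_drop (x : vec K n.+1) : vinsert (fun j => x (lift p j)) (x p) = x.
Proof.
by apply: functional_extensionality => i; rewrite /vinsert; case: unliftP => [j ->|->].
Qed.

Lemma coord_point_vinsert : coord_point K p = vinsert (fun _ => 0) 1.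
Proof.
apply: functional_extensionality => i; rewrite /vinsert /coord_point.
by case: unliftP => [j ->|->]; rewrite ?eqxx // eq_sym (negbTE (neq_lift p j)).
Qed.

Definition mdrop m : 'X_{1..n.+1} := [multinom m (lift p j) | j < n.+1].

Lemma mdeg_mdrop m : mdeg m = (m p + mdeg (mdrop m))%N.
Proof.
rewrite !mdegE (bigD1_ord p) //=; congr (_ + _)%N.
by apply: eq_bigr => j _; rewrite mnmE.
Qed.

Lemma homog_pivot_eq m d : mdeg m = d -> (m p == d) = (mdrop m == 0%MM).
Proof. by move=> <-; rewrite mdeg_mdrop -{1}[m p]addn0 eqn_add2l eq_sym mdeg_eq0. Qed.

Lemma prod_vinsert y s m :
  \prod_i vinsert y s i ^+ m i = s ^+ m p * \prod_j y j ^+ mdrop m j.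
Proof.
rewrite (bigD1_ord p) //= vinsert_pivot; congr (_ * _).
by apply: eq_bigr => j _; rewrite vinsert_lift mnmE.
Qed.

(* [f] viewed as a polynomial in the [p]-th variable. *)
Definition pivot_poly f : {poly {mpoly K[n.+1]}} :=
  \sum_(m <- msupp f) (f@_m *: 'X_[mdrop m]) *: 'X^(m p).

Lemma pivot_poly_eval f y s :
  (map_poly (meval y) (pivot_poly f)).[s] = f.@[vinsert y s].
Proof.
rewrite rmorph_sum /= horner_sum mevalE; apply: eq_bigr => m _.
rewrite map_polyZ map_polyXn hornerZ hornerXn /= mevalZ mevalX prod_vinsert.
by rewrite -mulrA [_ * s ^+ _]mulrC.
Qed.

Lemma coef_pivot_poly f k :
  (pivot_poly f)`_k = \sum_(m <- msupp f | m p == k) f@_m *: 'X_[mdrop m].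
Proof.
rewrite coef_sum [RHS]big_mkcond /=; apply: eq_bigr => m _.
by rewrite coefZ coefXn eq_sym; case: (m p == k); rewrite ?mulr1 ?mulr0.
Qed.

Lemma size_pivot_poly f d : homogeneous d f -> (size (pivot_poly f) <= d.+1)%N.
Proof.
move=> f_homog; apply/leq_sizeP => k dk; rewrite coef_pivot_poly big_seq_cond big_pred0 // => m.
case: (boolP (m \in msupp f)) => //= fm; apply/negbTE.
by rewrite neq_ltn (leq_ltn_trans _ dk) // -(f_homog m fm) mdeg_mdrop leq_addr.
Qed.

Lemma eval_coord_point f :
  f.@[coord_point K p] = \sum_(m <- msupp f | mdrop m == 0%MM) f@_m.
Proof.
rewrite coord_point_vinsert mevalE [RHS]big_mkcond /=; apply: eq_bigr => m _.
rewrite prod_vinsert expr1n mul1r prodrXr -mdegE expr0n mdeg_eq0.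
by case: (mdrop m == 0%MM); rewrite ?mulr1 ?mulr0.
Qed.

Lemma coef_pivot_poly_homog f d : homogeneous d f ->
  (pivot_poly f)`_d = (f.@[coord_point K p])%:MP.
Proof.
move=> f_homog; rewrite coef_pivot_poly eval_coord_point raddf_sum /=.
rewrite big_seq_cond [RHS]big_seq_cond; apply: eq_big => [m|m /andP[fm]].
  by case: (boolP (m \in msupp f)) => //= fm; rewrite homog_pivot_eq ?f_homog.
by rewrite homog_pivot_eq ?f_homog // => /eqP ->; rewrite mpolyX0 -alg_mpolyC.
Qed.

Lemma pivot_poly_lead f d : homogeneous d f -> f.@[coord_point K p] != 0 ->
  size (pivot_poly f) = d.+1 /\ lead_coef (pivot_poly f) = (f.@[coord_point K p])%:MP.
Proof.
move=> f_homog fp0; have coef_d := coef_pivot_poly_homog f_homog.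
have size_f : size (pivot_poly f) = d.+1.
  apply/anti_leq; rewrite size_pivot_poly //= ltnNge; apply: contra fp0.
  by move=> /leq_sizeP/(_ d (leqnn d)) /eqP; rewrite coef_d mpolyC_eq0.
by rewrite lead_coefE size_f.
Qed.

Lemma size_map_pivot_poly f d y : homogeneous d f -> f.@[coord_point K p] != 0 ->
  size (map_poly (meval y) (pivot_poly f)) = d.+1.
Proof.
move=> f_homog fp0; have [size_f lead_f] := pivot_poly_lead f_homog fp0.
by rewrite size_map_poly_id0 ?lead_f ?mevalC.
Qed.

End Pivot.

Lemma exists_nonvanishing_comb (K : closedFieldType) m (V : {mpoly K[m]} -> Prop)
    (w : K -> 'I_m -> K) (rs : seq K) :
  V 0 -> (forall f g c, V f -> V g -> V (f + c *: g)) ->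
  (forall r, r \in rs -> exists f, V f /\ f.@[w r] != 0) ->
  exists g, V g /\ forall r, r \in rs -> g.@[w r] != 0.
Proof.
move=> V0 V_comb; elim: rs => [|r rs IH] rs_sep; first by exists 0.
have [g [Vg g_rs]] : exists g, V g /\ forall r, r \in rs -> g.@[w r] != 0.
  by apply: IH => r' r'_rs; apply: rs_sep; rewrite inE r'_rs orbT.
have [f [Vf fr]] := rs_sep r (mem_head _ _).
pose ratio r' := - g.@[w r'] / f.@[w r'].
have [t t_bad] := exists_notin_seq (ratio r :: map ratio rs).
have t_ratio r' : f.@[w r'] != 0 -> (g + t *: f).@[w r'] = 0 -> t = ratio r'.
  move=> fr'0 e; apply: (mulIf fr'0); rewrite divfK //.
  by apply/eqP; rewrite -addr_eq0 addrC -mevalZ -mevalD e.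
exists (g + t *: f); split; first exact: V_comb.
move=> r0; rewrite inE => /orP[/eqP ->|r0_rs]; apply/eqP => e.
  by move/negP: t_bad; apply; rewrite (t_ratio _ fr e) mem_head.
have [fr0|fr0] := eqVneq f.@[w r0] 0.
  by move/eqP: (g_rs r0 r0_rs); apply; rewrite -e mevalD mevalZ fr0 mulr0 addr0.
by move/negP: t_bad; apply; rewrite (t_ratio _ fr0 e) inE map_f ?orbT.
Qed.

Section Elimination.
Variables (K : closedFieldType) (n : nat) (p : 'I_n.+2).
Implicit Types (X : vec K n.+1 -> Prop) (y : vec K n) (f g : {mpoly K[n.+2]}).

Lemma pivot_zeros_finite f d y : homogeneous d f -> f.@[coord_point K p] != 0 ->
  exists rs : seq K, forall s, f.@[vinsert p y s] = 0 -> s \in rs.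
Proof.
move=> f_homog fp0; have Py0 : map_poly (meval y) (pivot_poly p f) != 0.
  by rewrite -size_poly_eq0 (size_map_pivot_poly _ f_homog).
have [rs rsP] := poly_roots_finite Py0; exists rs => s fs0; apply: rsP.
by rewrite /root pivot_poly_eval fs0.
Qed.

Lemma fiber_finite X y : zclosed X -> ~ X (coord_point K p) ->
  exists rs : seq K, forall s, X (vinsert p y s) -> s \in rs.
Proof.
move=> zX Xp; have [f [d [f_homog [fp0 Xf]]]] :=
  zclosed_separating zX (coord_point_nonzero K p) Xp.
have [rs rsP] := pivot_zeros_finite y f_homog fp0.
by exists rs => s /Xf /rsP.
Qed.

(* Shifting [pivot_poly g] by a multiple of [pivot_poly f] gives it the same
   constant leading coefficient, so that the resultant commutes with
   evaluation at every [y]. *)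
Definition pivot_res f g : {mpoly K[n.+1]} :=
  resultant (pivot_poly p f)
    (pivot_poly p g + pivot_poly p f * 'X^(size (pivot_poly p g))).

Lemma pivot_res_eq0 f d g y : homogeneous d f -> f.@[coord_point K p] != 0 ->
  (pivot_res f g).@[y] = 0 <->
  exists s, f.@[vinsert p y s] = 0 /\ g.@[vinsert p y s] = 0.
Proof.
move=> f_homog fp0; have [size_f lead_f] := pivot_poly_lead f_homog fp0.
rewrite /pivot_res; set P := pivot_poly p f; set Q := pivot_poly p g + _.
have lead_Q : lead_coef Q = (f.@[coord_point K p])%:MP.
  rewrite lead_coefDr ?lead_coef_Mmonic ?monicXn //.
  by rewrite size_mulXn -?size_poly_eq0 ?size_f // addnS ltnS leq_addr.
have Q_eval s : (map_poly (meval y) Q).[s] =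
    g.@[vinsert p y s] + f.@[vinsert p y s] * s ^+ size (pivot_poly p g).
  by rewrite rmorphD rmorphM /= map_polyXn hornerD hornerM hornerXn !pivot_poly_eval.
have resE : (resultant P Q).@[y] == 0 <->
    exists s, root (map_poly (meval y) P) s /\ root (map_poly (meval y) Q) s.
  have meval_c : meval y (f.@[coord_point K p])%:MP != 0 by rewrite mevalC.
  rewrite (@rmorph_resultant _ _ (meval y)) ?lead_f ?lead_Q //.
  by apply: resultant_eq0_common_root; rewrite -size_poly_eq0 (size_map_pivot_poly _ f_homog).
split => [/eqP/resE [s []] | [s [fs gs]]].
  rewrite /root Q_eval pivot_poly_eval => /eqP fs; rewrite fs mul0r addr0 => /eqP gs.
  by exists s.
by apply/eqP/resE; exists s; rewrite /root Q_eval pivot_poly_eval fs gs mul0r addr0 eqxx.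
Qed.

Lemma zclosed_projection X : zclosed X -> ~ X (coord_point K p) ->
  zclosed (fun y => nonzero y /\ exists s, X (vinsert p y s)).
Proof.
move=> zX Xp; have [f [d [f_homog [fp0 Xf]]]] :=
  zclosed_separating zX (coord_point_nonzero K p) Xp.
pose I g := forall x, X x -> g.@[x] = 0.
apply: (@zclosed_cone _ _ _ (fun h => exists g, I g /\ h = pivot_res f g)); last first.
  move=> y a [y_nz [s Xs]] a0; split; first exact: nonzero_scale.
  by exists (a * s); rewrite -vinsert_scale; apply: zclosed_scale.
move=> y; split.
  case=> y_nz [s Xs]; split => // _ [g [Ig ->]].
  by apply/(pivot_res_eq0 _ _ f_homog fp0); exists s; rewrite Xf ?Ig.
case=> y_nz y_res; split => //; apply: NNPP => no_s.
have [rs rsP] := pivot_zeros_finite y f_homog fp0.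
have rs_sep r : r \in rs -> exists g, I g /\ g.@[vinsert p y r] != 0.
  move=> _; have [g [e [_ [gr Ig]]]] :=
    zclosed_separating zX (vinsert_nonzero p r y_nz) (fun Xr => no_s (ex_intro _ r Xr)).
  by exists g.
have I0 : I 0 by move=> x _; rewrite meval0.
have I_comb g h a : I g -> I h -> I (g + a *: h).
  by move=> Ig Ih x Xx; rewrite mevalD mevalZ Ig // Ih // mulr0 addr0.
have [g [Ig g_rs]] := exists_nonvanishing_comb I0 I_comb rs_sep.
have [r [fr gr]] := (pivot_res_eq0 g y f_homog fp0).1 (y_res _ (ex_intro _ g (conj Ig erefl))).
by move/eqP: (g_rs r (rsP r fr)).
Qed.

End Elimination.

Lemma mem_In (T : eqType) (x : T) (s : seq T) : x \in s -> List.In x s.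
Proof. by elim: s => //= y s IH; rewrite inE => /orP[/eqP ->|/IH]; [left|right]. Qed.

Section FiniteOffHyperplane.
Variable K : closedFieldType.

Definition pfinite n (X : vec K n -> Prop) :=
  exists L : seq (vec K n), forall x, X x -> points L x.

Lemma fibers_finite n (p : 'I_n.+2) (X : vec K n.+1 -> Prop) (L' : seq (vec K n)) :
  zclosed X -> ~ X (coord_point K p) ->
  exists L, forall y s, List.In y L' -> X (vinsert p y s) -> List.In (vinsert p y s) L.
Proof.
move=> zX Xp; elim: L' => [|y L' [L LP]]; first by exists [::].
have [rs rsP] := fiber_finite y zX Xp.
exists (List.app (List.map (vinsert p y) rs) L) => y' s [<-|y'L'] Xs.
  by apply/List.in_or_app; left; apply/List.in_map/mem_In/rsP.
by apply/List.in_or_app; right; apply: LP.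
Qed.

Lemma pfinite_off_hyperplane n (X : vec K n -> Prop) (i0 : 'I_n.+1) :
  zclosed X -> (forall x, X x -> x i0 != 0) -> pfinite X.
Proof.
elim: n X i0 => [|n IH] X i0 zX Xi0.
  exists [:: fun _ => 1] => x Xx; exists (fun _ => 1); split; first by left.
  split; first by exists ord0; rewrite oner_eq0.
  by exists (x i0); split; [exact: Xi0 | move=> i; rewrite mulr1 (ord1 i) (ord1 i0)].
have [p p_i0] : exists p : 'I_n.+2, p != i0.
  by have [->|i0_neq0] := eqVneq i0 ord0; [exists ord_max | exists ord0; rewrite eq_sym].
have [j0 i0E] : exists j0, i0 = lift p j0.
  by case: (unliftP p i0) => [j0 ->|i0p]; [exists j0 | rewrite i0p eqxx in p_i0].
have Xp : ~ X (coord_point K p).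
  by move=> /Xi0; rewrite /coord_point [i0 == p]eq_sym (negbTE p_i0) eqxx.
pose Y y := nonzero y /\ exists s, X (vinsert p y s).
have Yj0 y : Y y -> y j0 != 0 by move=> [_ [s /Xi0]]; rewrite i0E vinsert_lift.
have [L' YL'] := IH Y j0 (zclosed_projection zX Xp) Yj0.
have [L LP] := fibers_finite L' zX Xp.
exists L => x Xx; pose y j := x (lift p j).
have Yy : Y y.
  split; first by exists j0; rewrite /y -i0E; apply: Xi0.
  by exists (x p); rewrite vinsert_drop.
have [v [vL' [_ [c [c0 yE]]]]] := YL' y Yy.
have xE : vinsert p v (x p / c) = (fun i => c^-1 * x i).
  rewrite -[in RHS](vinsert_drop p x) vinsert_scale mulrC; congr vinsert.
  by apply: functional_extensionality => j; rewrite -/(y j) yE mulKf.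
have Xx' : X (vinsert p v (x p / c)).
  by rewrite xE; apply: zclosed_scale; rewrite ?invr_eq0.
exists (vinsert p v (x p / c)); split; first exact: LP.
split; first by rewrite xE; apply: nonzero_scale; [exists i0; apply: Xi0 | rewrite invr_eq0].
by exists c; split => // i; rewrite xE mulrA mulfV ?mul1r.
Qed.

Lemma curve_meets_hyperplane n (C : vec K n -> Prop) (i : 'I_n.+1) :
  irreducible_curve C -> exists x, C x /\ x i = 0.
Proof.
move=> curveC; apply: NNPP => no_x.
have Ci x : C x -> x i != 0 by move=> Cx; apply/eqP => xi0; apply: no_x; exists x.
have [L CL] := pfinite_off_hyperplane curveC.1.1 Ci.
exact/(curve_not_point curveC)/(irreducible_points curveC.1 CL).
Qed.

End FiniteOffHyperplane.

Section HadamardRank.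
Variables (K : closedFieldType) (N : nat) (C : vec K N -> Prop) (k : 'I_N.+1).
Hypothesis C_Delta : forall x, C x -> ~ Delta x.

Lemma off_Delta_neq0 x i j : C x -> i != j -> x i = 0 -> x j != 0.
Proof.
by move=> Cx ij xi; apply/eqP => xj; apply: (C_Delta Cx); exists i, j.
Qed.

Lemma hdecomp_coord_point :
  (forall i, exists x, C x /\ x i = 0) -> hdecomp C (coord_point K k) N.
Proof.
move=> C_meets; have [ps psP] := fin_all_exists (fun j : 'I_N => C_meets (lift k j)).
exists ps; split; first by move=> j; case: (psP j).
have prod_k : hadamard_prod ps k != 0.
  apply/prodf_neq0 => j _; have [Cj psj0] := psP j.
  by apply: (off_Delta_neq0 Cj _ psj0); rewrite eq_sym neq_lift.
split; first by exists k.
exists (hadamard_prod ps k)^-1; split; first by rewrite invr_eq0.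
move=> i; rewrite /coord_point; case: (unliftP k i) => [j ->|->]; last by rewrite eqxx mulVf.
rewrite eq_sym (negbTE (neq_lift k j)) /hadamard_prod.
by rewrite [X in _ * X](bigD1 j) //= (psP j).2 mul0r mulr0.
Qed.

Lemma hdecomp_coord_point_ge m : hdecomp C (coord_point K k) m -> (N <= m)%N.
Proof.
move=> [qs [Cqs [_ [c [c0 qsE]]]]].
have kills j : exists l : 'I_m, qs l (lift k j) == 0.
  have := qsE (lift k j); rewrite /coord_point eq_sym (negbTE (neq_lift k j)).
  move/esym/eqP; rewrite mulf_eq0 (negbTE c0) /= /hadamard_prod.
  by case/prodf_eq0 => l _ ql; exists l.
have [phi phiP] := fin_all_exists kills.
suff phi_inj : injective phi by have := leq_card phi phi_inj; rewrite !card_ord.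
move=> j1 j2 phi_eq; apply/eqP; apply: contraT => j12.
have := off_Delta_neq0 (j := lift k j2) (Cqs (phi j1)) _ (eqP (phiP j1)).
by rewrite (inj_eq (@lift_inj _ k)) phi_eq (phiP j2) => /(_ j12).
Qed.

End HadamardRank.

Theorem mainTheorem12 (K : closedFieldType) (N : nat) (hN : (2 <= N)%N)
  (C : vec K N -> Prop) :
  irreducible_curve C ->
  (forall x, C x -> ~ Delta x) ->
  forall k : 'I_N.+1, Hrk_is C (coord_point K k) N.
Proof.
move=> curveC C_Delta k; split; first exact: leq_trans hN.
split; first by apply: hdecomp_coord_point => // i; apply: curve_meets_hyperplane.
by move=> m _; apply: hdecomp_coord_point_ge.
Qed.
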